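(* Let $\mathrm{Var}$ be a variety of algebras with one binary multiplication defined by multilinear identities. If a multilinear polynomial $f$ in the operations $\cdot,\prec,\succ$ is an identity of all algebras over the operad $\mathrm{Var}\circ\mathrm{GD}^!$ (under the identification described below), then $f$ is a generalized derived identity of $\mathrm{Var}$.
   Context: For an algebra $A$ with derivation $d$, $A^{(d* )}=(A,\cdot,\prec,\succ)$ with $\cdot$ the original product, $x\prec y=x\,d(y)$, $x\succ y=d(x)\,y$; $f$ is a generalized derived identity of $\mathrm{Var}$ if $f=0$ on $A^{(d* )}$ for all $A\in\mathrm{Var}$ and all derivations $d$. The operad $\mathrm{Var}$ has components $\mathrm{Var}(n)$ = multilinear elements of degree $n$ in the free $\mathrm{Var}$-algebra on $x_1,x_2,\dots$. A $\mathrm{GD}^!$-algebra is a vector space with operations $*$, $\star$ such that $*$ is associative and commutative, $(x\star y)\star z-x\star(y\star z)=(x\star z)\star y-x\star(z\star y)$, $x\star(y\star z)=y\star(x\star z)$, $x\star(y*z)=(x\star y)*z$, $x\star(y*z)+y\star(x*z)=(x*y)\star z$; $\mathrm{GD}^!$ is the corresponding operad. The Hadamard product $\mathcal P\otimes\mathcal Q$ of operads has components $\mathcal P(n)\otimes\mathcal Q(n)$ with componentwise composition and symmetric group action; the Manin white product $\mathcal P\circ\mathcal Q$ is the suboperad of $\mathcal P\otimes\mathcal Q$ generated by $\mathcal P(2)\otimes\mathcal Q(2)$. The operations of $\mathrm{Var}\circ\mathrm{GD}^!$ are identified as $x_1\cdot x_2=x_1x_2\otimes(x_1*x_2)$, $x_1\succ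 x_2=x_1x_2\otimes(x_1\star x_2)$, $x_1\prec x_2=x_1x_2\otimes(x_2\star x_1)$. *)

From HB Require Import structures.
From mathcomp Require Import all_boot all_order all_algebra.
Set Implicit Arguments. Unset Strict Implicit. Unset Printing Implicit Defensive.
Import GRing.Theory.
Local Open Scope ring_scope.

(* one binary multiplication (language of Var) *)
Inductive term1 : Type := V1 of nat | M1 of term1 & term1.
(* the two operations * (Star) and \star (Bul) of GD^! *)
Inductive term2 : Type := V2 of nat | Star of term2 & term2 | Bul of term2 & term2.
Inductive term3 : Type :=
  V3 of nat | Dot of term3 & term3 | Prec of term3 & term3 | Succ of term3 & term3.

Definition term1_comp : comparable term1. Proof. unfold comparable, decidable; decide equality; exact: (eq_comparable _). Defined.
Definition term2_comp : comparable term2. Proof. unfold comparable, decidable; decide equality; exact: (eq_comparable _). Defined.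
Definition term3_comp : comparable term3. Proof. unfold comparable, decidable; decide equality; exact: (eq_comparable _). Defined.
HB.instance Definition _ := comparableMixin term1_comp.
HB.instance Definition _ := comparableMixin term2_comp.
HB.instance Definition _ := comparableMixin term3_comp.

Fixpoint leaves1 (t : term1) : seq nat :=
  match t with V1 i => [:: i] | M1 a b => leaves1 a ++ leaves1 b end.
Fixpoint leaves2 (t : term2) : seq nat :=
  match t with V2 i => [:: i] | Star a b | Bul a b => leaves2 a ++ leaves2 b end.
Fixpoint leaves3 (t : term3) : seq nat :=
  match t with V3 i => [:: i]
  | Dot a b | Prec a b | Succ a b => leaves3 a ++ leaves3 b end.

Definition mlin1 (n : nat) (t : term1) : bool := perm_eq (leaves1 t) (iota 0 n).
Definition mlin2 (n : nat) (t : term2) : bool := perm_eq (leaves2 t) (iota 0 n).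
Definition mlin3 (n : nat) (t : term3) : bool := perm_eq (leaves3 t) (iota 0 n).

Section Algebra.
Variable K : fieldType.

Definition poly1 := seq (K * term1).
Definition poly2 := seq (K * term2).
Definition poly3 := seq (K * term3).

Definition multilin1 (n : nat) (p : poly1) : bool := all (fun c => mlin1 n c.2) p.
Definition multilin2 (n : nat) (p : poly2) : bool := all (fun c => mlin2 n c.2) p.
Definition multilin3 (n : nat) (p : poly3) : bool := all (fun c => mlin3 n c.2) p.

Definition coef (X : eqType) (s : seq (K * X)) (x : X) : K :=
  \sum_(c <- s) (if c.2 == x then c.1 else 0).

Definition bilinear_op (V : lmodType K) (m : V -> V -> V) : Prop :=
  (forall (k : K) (x y z : V), m (k *: x + y) z = k *: m x z + m y z) /\
  (forall (k : K) (x y z : V), m z (k *: x + y) = k *: m z x + m z y).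

Definition is_derivation (V : lmodType K) (m : V -> V -> V) (d : V -> V) : Prop :=
  (forall (k : K) (x y : V), d (k *: x + y) = k *: d x + d y) /\
  (forall x y : V, d (m x y) = m (d x) y + m x (d y)).

Fixpoint eval1 (V : lmodType K) (m : V -> V -> V) (v : nat -> V) (t : term1) : V :=
  match t with V1 i => v i | M1 a b => m (eval1 m v a) (eval1 m v b) end.
Fixpoint eval2 (V : lmodType K) (st bu : V -> V -> V) (v : nat -> V) (t : term2) : V :=
  match t with V2 i => v i
  | Star a b => st (eval2 st bu v a) (eval2 st bu v b)
  | Bul a b => bu (eval2 st bu v a) (eval2 st bu v b) end.
Fixpoint eval3 (V : lmodType K) (dt pr su : V -> V -> V) (v : nat -> V) (t : term3) : V :=
  match t with V3 i => v i
  | Dot a b => dt (eval3 dt pr su v a) (eval3 dt pr su v b)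
  | Prec a b => pr (eval3 dt pr su v a) (eval3 dt pr su v b)
  | Succ a b => su (eval3 dt pr su v a) (eval3 dt pr su v b) end.

Definition holds1 (V : lmodType K) (m : V -> V -> V) (p : poly1) : Prop :=
  forall v : nat -> V, \sum_(c <- p) c.1 *: eval1 m v c.2 = 0.
Definition holds2 (V : lmodType K) (st bu : V -> V -> V) (p : poly2) : Prop :=
  forall v : nat -> V, \sum_(c <- p) c.1 *: eval2 st bu v c.2 = 0.
Definition holds3 (V : lmodType K) (dt pr su : V -> V -> V) (p : poly3) : Prop :=
  forall v : nat -> V, \sum_(c <- p) c.1 *: eval3 dt pr su v c.2 = 0.

Definition in_Var (S : poly1 -> Prop) (V : lmodType K) (m : V -> V -> V) : Prop :=
  bilinear_op m /\ forall s, S s -> holds1 m s.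

Definition Var_identity (S : poly1 -> Prop) (p : poly1) : Prop :=
  forall (V : lmodType K) (m : V -> V -> V), in_Var S m -> holds1 m p.

Definition is_GDshriek (V : lmodType K) (st bu : V -> V -> V) : Prop :=
  [/\ bilinear_op st, bilinear_op bu,
      (forall x y z, st (st x y) z = st x (st y z)) &
      (forall x y, st x y = st y x)] /\
  [/\ (forall x y z, bu (bu x y) z - bu x (bu y z) = bu (bu x z) y - bu x (bu z y)),
      (forall x y z, bu x (bu y z) = bu y (bu x z)),
      (forall x y z, bu x (st y z) = st (bu x y) z) &
      (forall x y z, bu x (st y z) + bu y (st x z) = bu (st x y) z)].

Definition GDshriek_identity (p : poly2) : Prop :=
  forall (V : lmodType K) (st bu : V -> V -> V), is_GDshriek st bu -> holds2 st bu p.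

End Algebra.

(* the identification: x.y = xy (x) (x*y), x>y = xy (x) (x*y), x<y = xy (x) (y*x) *)
Fixpoint proj1t (t : term3) : term1 :=
  match t with V3 i => V1 i
  | Dot a b | Prec a b | Succ a b => M1 (proj1t a) (proj1t b) end.
Fixpoint proj2t (t : term3) : term2 :=
  match t with V3 i => V2 i
  | Dot a b => Star (proj2t a) (proj2t b)
  | Succ a b => Bul (proj2t a) (proj2t b)
  | Prec a b => Bul (proj2t b) (proj2t a) end.

Section WhiteProduct.
Variable K : fieldType.

(* image of a multilinear polynomial g (degree n) of the free operad on
   . , <, > in Var(n) (x) GD^!(n) = (M1(n)/I(n)) (x) (M2(n)/J(n)), written as a
   formal combination of pairs of multilinear monomials in M1(n) (x) M2(n) *)
Definition tensor_image (g : poly3 K) : seq (K * (term1 * term2)) :=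
  map (fun c => (c.1, (proj1t c.2, proj2t c.2))) g.

(* u is zero in (M1(n)/I(n)) (x) (M2(n)/J(n)), i.e. u lies in
   I(n) (x) M2(n) + M1(n) (x) J(n), where I(n) (resp. J(n)) is the space of
   multilinear degree-n identities of Var (resp. of GD^!). *)
Definition zero_in_tensor (S : poly1 K -> Prop) (n : nat)
    (u : seq (K * (term1 * term2))) : Prop :=
  exists (L : seq (poly1 K * term2)) (R : seq (term1 * poly2 K)),
    [/\ forall x, x \in L -> [/\ multilin1 n x.1, Var_identity S x.1 & mlin2 n x.2],
        forall y, y \in R -> [/\ mlin1 n y.1, multilin2 n y.2 & GDshriek_identity y.2] &
        forall (a : term1) (b : term2),
          coef u (a, b) =
            \sum_(x <- L) coef x.1 a * (x.2 == b)%:R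
          + \sum_(y <- R) (y.1 == a)%:R * coef y.2 b].

(* algebras over the operad Var o GD^! (Manin white product): three bilinear
   operations satisfying every multilinear relation g which is zero in
   (Var o GD^!)(n), a suboperad of Var(n) (x) GD^!(n) *)
Definition is_VarGDshriek_alg (S : poly1 K -> Prop) (V : lmodType K)
    (dt pr su : V -> V -> V) : Prop :=
  [/\ bilinear_op dt, bilinear_op pr, bilinear_op su &
      forall (n : nat) (g : poly3 K), multilin3 n g ->
        zero_in_tensor S n (tensor_image g) -> holds3 dt pr su g].

Definition gen_derived_identity (S : poly1 K -> Prop) (f : poly3 K) : Prop :=
  forall (A : lmodType K) (m : A -> A -> A) (d : A -> A),
    in_Var S m -> is_derivation m d ->
    holds3 m (fun x y => m x (d y)) (fun x y => m (d x) y) f.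

End WhiteProduct.

From mathcomp Require Import all_boot all_order all_algebra.
From mathcomp Require Import mpoly ring zify.

Set Implicit Arguments. Unset Strict Implicit. Unset Printing Implicit Defensive.
Import GRing.Theory.
Local Open Scope ring_scope.

(* Let A be in Var with a derivation d, and let B = K[z_0..z_(n-1), l_0..l_(n-1)] with the
   derivation D = sum_j l_j z_j d/dz_j, so that (B, x y, D(x) y) is a GD^!-algebra.  A multilinear
   monomial t in ., <, > evaluated in B at x_i = z_i is a combination of monomials
   prod_i z_i l_i^(k_i), and evaluated in A^(d* ) it is the same combination of the values of the
   underlying Var-monomial at the points d^(k_i)(v_i): the exponent of l_i counts how often d
   falls on the i-th variable.  So the evaluation in A^(d* ) factors through a map
   Var(n) (x) B -> A, which kills I(n) (x) B because identities of Var hold at arbitrary points,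
   and Var(n) (x) J(n) because identities of GD^! vanish in B.  Hence every relation of
   Var o GD^! holds in A^(d* ). *)

Section LinearFor.
Variables (K : fieldType) (V W : lmodType K) (f : V -> W).
Hypothesis f_lin : linear f.

Lemma linear_forD : {morph f : x y / x + y}.
Proof. by move=> x y; have := f_lin 1 x y; rewrite !scale1r. Qed.

Lemma linear_forZ : scalable f.
Proof. exact: scalable_linear. Qed.

Lemma linear_for0 : f 0 = 0.
Proof. by rewrite -(scale0r (0 : V)) linear_forZ scale0r. Qed.

Lemma linear_for_sum (I : Type) (r : seq I) (F : I -> V) :
  f (\sum_(i <- r) F i) = \sum_(i <- r) f (F i).
Proof. exact: (big_morph f linear_forD linear_for0). Qed.

End LinearFor.

Section BilinearOp.
Variables (K : fieldType) (V : lmodType K) (m : V -> V -> V).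
Hypothesis m_bilin : bilinear_op m.

Lemma bilinear_op_linl z : linear (m^~ z).
Proof. by move=> k x y; exact: m_bilin.1. Qed.

Lemma bilinear_op_linr z : linear (m z).
Proof. by move=> k x y; exact: m_bilin.2. Qed.

Lemma bilinear_op_comp_left (d : V -> V) : linear d -> bilinear_op (fun x y => m (d x) y).
Proof.
by move=> d_lin; split=> k x y z; [rewrite (d_lin k x y) m_bilin.1 | rewrite m_bilin.2].
Qed.

Lemma bilinear_op_comp_right (d : V -> V) : linear d -> bilinear_op (fun x y => m x (d y)).
Proof.
by move=> d_lin; split=> k x y z; [rewrite m_bilin.1 | rewrite (d_lin k x y) m_bilin.2].
Qed.

End BilinearOp.

Section FormalSums.
Variables (K : fieldType) (X : eqType) (V : lmodType K) (F : X -> V).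

Lemma sum_coefE (s : seq (K * X)) (T : seq X) : uniq T -> {subset map snd s <= T} ->
  \sum_(c <- s) c.1 *: F c.2 = \sum_(x <- T) coef s x *: F x.
Proof.
move=> uT; elim: s => [|c s IH] sub.
  by rewrite big_nil; apply/esym/big1 => x _; rewrite /coef big_nil scale0r.
rewrite big_cons IH => [|x hx]; last by apply: sub; rewrite inE hx orbT.
have cT : c.2 \in T by apply: sub; rewrite inE eqxx.
under [RHS]eq_bigr => x _ do rewrite /coef big_cons scalerDl.
rewrite big_split /=; congr (_ + _).
rewrite (bigD1_seq c.2) //= eqxx big1 ?addr0 // => x /negbTE.
by rewrite eq_sym => ->; rewrite scale0r.
Qed.

Lemma eq_sum_coef (s s' : seq (K * X)) : coef s =1 coef s' ->
  \sum_(c <- s) c.1 *: F c.2 = \sum_(c <- s') c.1 *: F c.2.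
Proof.
move=> eq_coef; pose T := undup (map snd s ++ map snd s').
have uT : uniq T := undup_uniq _.
rewrite (@sum_coefE s T uT) => [|x hx]; last by rewrite mem_undup mem_cat hx.
rewrite (@sum_coefE s' T uT) => [|x hx]; last by rewrite mem_undup mem_cat hx orbT.
by apply: eq_bigr => x _; rewrite eq_coef.
Qed.

End FormalSums.

Lemma leaves_proj1t t : leaves1 (proj1t t) = leaves3 t.
Proof. by elim: t => //= a -> b ->. Qed.

Lemma eq_in_eval1 (K : fieldType) (V : lmodType K) (m : V -> V -> V) (v1 v2 : nat -> V) a :
  {in leaves1 a, v1 =1 v2} -> eval1 m v1 a = eval1 m v2 a.
Proof.
elim: a => [i|a IHa b IHb] /= eq_v; first by apply: eq_v; rewrite inE.
by rewrite IHa ?IHb // => x hx; apply: eq_v; rewrite mem_cat hx ?orbT.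
Qed.

Definition incr_at (k : nat -> nat) (i : nat) : nat -> nat :=
  fun j => if j == i then (k j).+1 else k j.

Definition join_at (S : seq nat) (k1 k2 : nat -> nat) : nat -> nat :=
  fun i => if i \in S then k1 i else k2 i.

Lemma incr_at_eq k i : incr_at k i i = (k i).+1.
Proof. by rewrite /incr_at eqxx. Qed.

Lemma incr_at_notin (S : seq nat) k i : i \notin S -> {in S, incr_at k i =1 k}.
Proof. by move=> iNS j jS; rewrite /incr_at; case: eqP => // eji; rewrite -eji jS in iNS. Qed.

Lemma join_atl S k1 k2 : {in S, join_at S k1 k2 =1 k1}.
Proof. by move=> i iS; rewrite /join_at iS. Qed.

Lemma join_atr S1 S2 k1 k2 : uniq (S1 ++ S2) -> {in S2, join_at S1 k1 k2 =1 k2}.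
Proof.
by rewrite cat_uniq => /and3P [_ /hasPn disj _] i /disj iNS1; rewrite /join_at (negbTE iNS1).
Qed.

Section CoefficientLists.
Variable K : fieldType.
Implicit Types F : seq (K * (nat -> nat)).

Definition comb_mul (S1 : seq nat) F1 F2 : seq (K * (nat -> nat)) :=
  [seq (x.1 * y.1, join_at S1 x.2 y.2) | x <- F1, y <- F2].

Definition comb_incr (S : seq nat) F : seq (K * (nat -> nat)) :=
  [seq (c.1, incr_at c.2 i) | c <- F, i <- S].

End CoefficientLists.

Section IteratedDerivatives.
Variables (K : fieldType) (A : lmodType K) (m : A -> A -> A) (d : A -> A) (v : nat -> A).
Hypotheses (m_bilin : bilinear_op m) (d_der : is_derivation m d).

Definition evald (a : term1) (k : nat -> nat) : A := eval1 m (fun i => iter (k i) d (v i)) a.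

Lemma eq_in_evald a k1 k2 : {in leaves1 a, k1 =1 k2} -> evald a k1 = evald a k2.
Proof. by move=> eq_k; apply: eq_in_eval1 => i /eq_k /= ->. Qed.

Lemma evald_M1 a b k1 k2 : uniq (leaves1 a ++ leaves1 b) ->
  evald (M1 a b) (join_at (leaves1 a) k1 k2) = m (evald a k1) (evald b k2).
Proof.
by move=> u_ab; congr (m _ _); apply: eq_in_evald; [apply: join_atl | apply: join_atr].
Qed.

Lemma derivation_evald a k : uniq (leaves1 a) ->
  d (evald a k) = \sum_(i <- leaves1 a) evald a (incr_at k i).
Proof.
elim: a k => [i|a IHa b IHb] k /=; first by rewrite big_seq1 /evald /= incr_at_eq.
rewrite cat_uniq => /and3P [ua /hasPn disj ub].
rewrite /evald /= d_der.2 -!/(evald _ k) IHa // IHb // big_cat /=.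
rewrite (linear_for_sum (bilinear_op_linl m_bilin _)).
rewrite (linear_for_sum (bilinear_op_linr m_bilin _)).
congr (_ + _); apply: eq_big_seq => i hi; congr (m _ _); apply/esym/eq_in_evald.
- exact: incr_at_notin (contraL (disj i) hi).
- exact: incr_at_notin (disj i hi).
Qed.

Definition evald_comb (a : term1) (F : seq (K * (nat -> nat))) : A :=
  \sum_(c <- F) c.1 *: evald a c.2.

Lemma evald_comb_M1 a b F1 F2 : uniq (leaves1 a ++ leaves1 b) ->
  m (evald_comb a F1) (evald_comb b F2) = evald_comb (M1 a b) (comb_mul (leaves1 a) F1 F2).
Proof.
move=> u_ab; rewrite /evald_comb big_allpairs_dep.
rewrite (linear_for_sum (bilinear_op_linl m_bilin _)); apply: eq_bigr => x _ /=.
rewrite (linear_forZ (bilinear_op_linl m_bilin _)) /= (linear_for_sum (bilinear_op_linr m_bilin _)).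
rewrite scaler_sumr; apply: eq_bigr => y _ /=.
by rewrite (linear_forZ (bilinear_op_linr m_bilin _)) /= scalerA evald_M1.
Qed.

Lemma derivation_evald_comb a F : uniq (leaves1 a) ->
  d (evald_comb a F) = evald_comb a (comb_incr (leaves1 a) F).
Proof.
move=> ua; rewrite /evald_comb big_allpairs_dep (linear_for_sum d_der.1).
by apply: eq_bigr => c _; rewrite (linear_forZ d_der.1) derivation_evald // scaler_sumr.
Qed.

End IteratedDerivatives.

Lemma GDshriek_derivation (K : fieldType) (R : comAlgType K) (D : R -> R) :
  is_derivation *%R D -> is_GDshriek *%R (fun x y => D x * y).
Proof.
move=> [D_lin DM].
have mul_bilin : bilinear_op (@GRing.mul R).
  by split=> k x y z; rewrite ?mulrDl ?mulrDr -?scalerAl -?scalerAr.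
split; split.
- exact: mul_bilin.
- exact: bilinear_op_comp_left.
- by move=> x y z; rewrite mulrA.
- exact: mulrC.
- by move=> x y z; rewrite !DM; ring.
- by move=> x y z; ring.
- by move=> x y z; ring.
- by move=> x y z; rewrite DM; ring.
Qed.

Section MpolyLinearExtension.
Variables (K : fieldType) (k : nat) (V : lmodType K) (G : 'X_{1..k} -> V).

Definition mpoly_linext (p : {mpoly K[k]}) : V := \sum_(mm <- msupp p) p@_mm *: G mm.

Lemma mpoly_linextE p s : uniq s -> {subset msupp p <= s} ->
  mpoly_linext p = \sum_(mm <- s) p@_mm *: G mm.
Proof.
move=> us sub; rewrite /mpoly_linext [RHS](bigID (mem (msupp p))) /=.
rewrite [X in _ = _ + X]big1 ?addr0 => [|mm /memN_msupp_eq0 ->]; last by rewrite scale0r.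
rewrite -[RHS]big_filter; apply: perm_big; apply: uniq_perm; rewrite ?msupp_uniq ?filter_uniq //.
by move=> mm; rewrite mem_filter andb_idr //; apply: sub.
Qed.

Lemma mpoly_linext_is_linear : linear mpoly_linext.
Proof.
move=> c p q; pose s := undup (msupp p ++ msupp q ++ msupp (c *: p + q)).
have us : uniq s := undup_uniq _.
rewrite (@mpoly_linextE _ s) // => [|mm hm]; last by rewrite mem_undup !mem_cat hm !orbT.
rewrite (@mpoly_linextE p s) // => [|mm hm]; last by rewrite mem_undup !mem_cat hm.
rewrite (@mpoly_linextE q s) // => [|mm hm]; last by rewrite mem_undup !mem_cat hm !orbT.
rewrite scaler_sumr -big_split; apply: eq_bigr => mm _ /=.
by rewrite mcoeffD mcoeffZ scalerDl scalerA.
Qed.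

Lemma mpoly_linextX mm : mpoly_linext 'X_[mm] = G mm.
Proof. by rewrite /mpoly_linext msuppX big_seq1 mcoeffX eqxx scale1r. Qed.

End MpolyLinearExtension.

Section ZLPolynomials.
Variables (K : fieldType) (n : nat).
Local Notation N := (n + n).+1.
Local Notation B := {mpoly K[N]}.

(* z_i and l_i are the variables i and n + i; the spare last variable only makes 'I_N
   inhabited, as inord requires. *)
Definition zvar (i : nat) : 'I_N := inord i.
Definition lvar (i : nat) : 'I_N := inord (n + i).

Lemma zvar_inj i j : (i < n)%N -> (j < n)%N -> (zvar i == zvar j) = (i == j).
Proof. by move=> ? ?; rewrite -val_eqE /= !inordK //; lia. Qed.

Lemma lvar_inj i j : (i < n)%N -> (j < n)%N -> (lvar i == lvar j) = (i == j).
Proof. by move=> ? ?; rewrite -val_eqE /= !inordK ?eqn_add2l //; lia. Qed.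

Lemma zvar_neq_lvar i j : (i < n)%N -> (j < n)%N -> (zvar i == lvar j) = false.
Proof. by move=> ? ?; rewrite -val_eqE /= !inordK; lia. Qed.

Definition lderiv (p : B) : B := \sum_(j < n) 'X_(lvar j) * 'X_(zvar j) * p^`M(zvar j).

Lemma lderiv_is_derivation : is_derivation *%R lderiv.
Proof.
split=> [c p q|p q]; rewrite /lderiv.
  rewrite scaler_sumr -big_split; apply: eq_bigr => j _.
  by rewrite mderivD mderivZ mulrDr scalerAr.
by rewrite mulr_suml mulr_sumr -big_split; apply: eq_bigr => j _ /=; rewrite mderivM; ring.
Qed.

Lemma lderivX (mm : 'X_{1..N}) :
  (forall j, (j < n)%N -> mm (zvar j) = 0%N) -> lderiv 'X_[mm] = 0.
Proof. by move=> mmz; rewrite /lderiv big1 // => j _; rewrite mderivX mmz // scale0r mulr0. Qed.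

Lemma lderiv_zvar i : (i < n)%N -> lderiv 'X_(zvar i) = 'X_(lvar i) * 'X_(zvar i).
Proof.
move=> lt_in; rewrite /lderiv (bigD1 (Ordinal lt_in)) //= big1 ?addr0 => [|j neq_ji].
  by rewrite mderivX mnm1E eqxx -[X in (X - _)%MM]add0m addmK mpolyX0 scale1r mulr1.
have /negbTE neq_ij : i != j by apply: contra neq_ji => /eqP eq_ij; apply/eqP/val_inj.
by rewrite mderivX mnm1E zvar_inj // neq_ij scale0r mulr0.
Qed.

Lemma lderiv_lvarX i e : (i < n)%N -> lderiv ('X_(lvar i) ^+ e) = 0.
Proof.
move=> lt_in; rewrite mpolyXn; apply: lderivX => j lt_jn.
by rewrite mulmnE mnm1E eq_sym zvar_neq_lvar.
Qed.

Definition zlmono (S : seq nat) (k : nat -> nat) : B :=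
  \prod_(i <- S) ('X_(zvar i) * 'X_(lvar i) ^+ k i).

Lemma eq_in_zlmono S k1 k2 : {in S, k1 =1 k2} -> zlmono S k1 = zlmono S k2.
Proof. by move=> eq_k; apply: eq_big_seq => i /eq_k ->. Qed.

Lemma zlmono_cons s S k : zlmono (s :: S) k = 'X_(zvar s) * 'X_(lvar s) ^+ k s * zlmono S k.
Proof. exact: big_cons. Qed.

Lemma zlmono_cat S1 S2 k1 k2 : uniq (S1 ++ S2) ->
  zlmono (S1 ++ S2) (join_at S1 k1 k2) = zlmono S1 k1 * zlmono S2 k2.
Proof.
move=> u12; rewrite /zlmono big_cat -!/(zlmono _ _).
by rewrite (eq_in_zlmono (@join_atl S1 k1 k2)) (eq_in_zlmono (join_atr k1 k2 u12)).
Qed.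

Lemma lderiv_zlmono S k : uniq S -> all (fun i => i < n)%N S ->
  lderiv (zlmono S k) = \sum_(i <- S) zlmono S (incr_at k i).
Proof.
have [_ lderivM] := lderiv_is_derivation.
elim: S => [|s S IH] /=.
  by rewrite /zlmono big_nil big_nil -mpolyX0 lderivX // => j _; rewrite mnm0E.
move=> /andP [sNS uS] /andP [lt_sn Sn].
rewrite big_cons !zlmono_cons lderivM IH // lderivM lderiv_zvar // lderiv_lvarX // mulr0 addr0.
rewrite incr_at_eq (eq_in_zlmono (incr_at_notin k sNS)) mulr_sumr; congr (_ + _).
  by rewrite exprS; ring.
apply: eq_big_seq => i iS; have /negbTE neq_si : s != i by apply: contraNneq sNS => ->.
by rewrite zlmono_cons /incr_at neq_si.
Qed.

Definition zlmnm (S : seq nat) (k : nat -> nat) : 'X_{1..N} :=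
  (\sum_(i <- S) (U_(zvar i) + U_(lvar i) *+ k i))%MM.

Lemma zlmonoE S k : zlmono S k = 'X_[zlmnm S k].
Proof. by rewrite /zlmono -mprodXE; apply: eq_bigr => i _; rewrite mpolyXn -mpolyXD. Qed.

Lemma zlmnm_lvar S k j : uniq S -> all (fun i => i < n)%N S -> j \in S ->
  zlmnm S k (lvar j) = k j.
Proof.
move=> uS /allP Sn jS; rewrite mnm_sumE (bigD1_seq j) //= big1_seq => [|i /andP [neq_ij iS]].
  by rewrite mnmDE mulmnE !mnm1E zvar_neq_lvar ?lvar_inj ?Sn // eqxx mul1n addn0.
by rewrite mnmDE mulmnE !mnm1E zvar_neq_lvar ?lvar_inj ?Sn // (negbTE neq_ij).
Qed.

Definition zlcomb (S : seq nat) (F : seq (K * (nat -> nat))) : B :=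
  \sum_(c <- F) c.1 *: zlmono S c.2.

Lemma zlcomb_mul S1 S2 F1 F2 : uniq (S1 ++ S2) ->
  zlcomb S1 F1 * zlcomb S2 F2 = zlcomb (S1 ++ S2) (comb_mul S1 F1 F2).
Proof.
move=> u12; rewrite /zlcomb big_allpairs_dep mulr_suml; apply: eq_bigr => x _.
rewrite mulr_sumr; apply: eq_bigr => y _ /=.
by rewrite zlmono_cat // -scalerAl -scalerAr scalerA.
Qed.

Lemma lderiv_zlcomb S F : uniq S -> all (fun i => i < n)%N S ->
  lderiv (zlcomb S F) = zlcomb S (comb_incr S F).
Proof.
have [lderiv_lin _] := lderiv_is_derivation.
move=> uS Sn; rewrite /zlcomb big_allpairs_dep (linear_for_sum lderiv_lin).
by apply: eq_bigr => c _; rewrite (linear_forZ lderiv_lin) lderiv_zlmono // scaler_sumr.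
Qed.

End ZLPolynomials.

Section DerivedAlgebra.
Variables (K : fieldType) (A : lmodType K) (m : A -> A -> A) (d : A -> A).
Hypotheses (m_bilin : bilinear_op m) (d_der : is_derivation m d).
Variable n : nat.
Local Notation B := {mpoly K[(n + n).+1]}.
Local Notation prec := (fun x y => m x (d y)).
Local Notation succ := (fun x y => m (d x) y).
Local Notation bul := (fun x y : B => lderiv x * y).
Local Notation zvarX := (fun i => 'X_(zvar n i) : B).

Lemma eval3_zlcomb (v : nat -> A) t :
  uniq (leaves1 (proj1t t)) -> all (fun i => i < n)%N (leaves1 (proj1t t)) ->
  exists F, eval2 *%R bul zvarX (proj2t t) = zlcomb n (leaves1 (proj1t t)) F /\
            eval3 m prec succ v t = evald_comb m d v (proj1t t) F.
Proof.
elim: t => [i _ _|a IHa b IHb|a IHa b IHb|a IHa b IHb] /=.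
  exists [:: (1, fun _ => 0%N)].
  by rewrite /zlcomb /zlmono /evald_comb !big_seq1 /= expr0 mulr1 !scale1r.
all: move=> u_ab; rewrite all_cat => /andP [an bn].
all: move: (u_ab); rewrite cat_uniq => /and3P [ua _ ub].
all: have [Fa [-> ->]] := IHa ua an; have [Fb [-> ->]] := IHb ub bn.
- exists (comb_mul (leaves1 (proj1t a)) Fa Fb).
  by rewrite zlcomb_mul // evald_comb_M1.
- exists (comb_mul (leaves1 (proj1t a)) Fa (comb_incr (leaves1 (proj1t b)) Fb)).
  by rewrite mulrC lderiv_zlcomb // zlcomb_mul // derivation_evald_comb // evald_comb_M1.
- exists (comb_mul (leaves1 (proj1t a)) (comb_incr (leaves1 (proj1t a)) Fa) Fb).
  by rewrite lderiv_zlcomb // zlcomb_mul // derivation_evald_comb // evald_comb_M1.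
Qed.

Definition evald_ext (v : nat -> A) (a : term1) : B -> A :=
  mpoly_linext (fun mm => evald m d v a (fun i => mm (lvar n i))).

Lemma evald_ext_is_linear v a : linear (evald_ext v a).
Proof. exact: mpoly_linext_is_linear. Qed.

Lemma evald_ext_zlcomb v a F : uniq (leaves1 a) -> all (fun i => i < n)%N (leaves1 a) ->
  evald_ext v a (zlcomb n (leaves1 a) F) = evald_comb m d v a F.
Proof.
move=> ua an; rewrite /evald_ext /zlcomb (linear_for_sum (mpoly_linext_is_linear _)).
apply: eq_bigr => c _; rewrite (linear_forZ (mpoly_linext_is_linear _)) zlmonoE mpoly_linextX.
by congr (_ *: _); apply: eq_in_evald => i ia; rewrite zlmnm_lvar.
Qed.

Lemma eval3_evald_ext v t : perm_eq (leaves3 t) (iota 0 n) ->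
  eval3 m prec succ v t = evald_ext v (proj1t t) (eval2 *%R bul zvarX (proj2t t)).
Proof.
rewrite -leaves_proj1t => lt_perm.
have ut : uniq (leaves1 (proj1t t)) by rewrite (perm_uniq lt_perm) iota_uniq.
have tn : all (fun i => i < n)%N (leaves1 (proj1t t)).
  by apply/allP => i; rewrite (perm_mem lt_perm) mem_iota.
by have [F [-> ->]] := eval3_zlcomb v ut tn; rewrite evald_ext_zlcomb.
Qed.

Lemma evald_ext_Var_identity S p v b : in_Var S m -> Var_identity S p ->
  \sum_(c <- p) c.1 *: evald_ext v c.2 b = 0.
Proof.
move=> HV p_id; rewrite /evald_ext /mpoly_linext.
under eq_bigr do rewrite scaler_sumr.
rewrite exchange_big big1 //= => mm _.
under eq_bigr do rewrite scalerA mulrC -scalerA.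
by rewrite -scaler_sumr (p_id _ _ HV) scaler0.
Qed.

Lemma holds3_derived_zero_in_tensor S g : in_Var S m -> multilin3 n g ->
  zero_in_tensor S n (tensor_image g) -> holds3 m prec succ g.
Proof.
move=> HV g_lin [L [R [HL HR coef_g]]] v.
pose Psi (x : term1 * term2) := evald_ext v x.1 (eval2 *%R bul zvarX x.2).
have -> : \sum_(c <- g) c.1 *: eval3 m prec succ v c.2 = \sum_(u <- tensor_image g) u.1 *: Psi u.2.
  by rewrite big_map; apply: eq_big_seq => c /(allP g_lin) /eval3_evald_ext ->.
pose sL := flatten [seq [seq (c.1, (c.2, x.2)) | c <- x.1] | x <- L].
pose sR := flatten [seq [seq (c.1, (y.1, c.2)) | c <- y.2] | y <- R].
rewrite (@eq_sum_coef _ _ _ Psi _ (sL ++ sR)) => [|[a b]]; last first.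
  rewrite coef_g /coef big_cat !big_flatten /= !big_map; congr (_ + _).
    apply: eq_bigr => x _; rewrite big_map mulr_suml; apply: eq_bigr => c _ /=.
    by rewrite xpair_eqE; case: (c.2 == a); case: (x.2 == b); rewrite ?mulr1 ?mulr0.
  apply: eq_bigr => y _; rewrite big_map mulr_sumr; apply: eq_bigr => c _ /=.
  by rewrite xpair_eqE; case: (c.2 == b); case: (y.1 == a); rewrite ?mul1r ?mul0r.
rewrite big_cat !big_flatten /= !big_map big1_seq ?add0r => [|x /andP [_ xL]].
  apply: big1_seq => y /andP [_ yR]; have [_ _ y_id] := HR y yR.
  have GD := GDshriek_derivation (lderiv_is_derivation K n).
  have ext_lin := evald_ext_is_linear v y.1.
  rewrite big_map -[RHS](linear_for0 ext_lin) -(y_id _ _ _ GD zvarX) (linear_for_sum ext_lin).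
  by apply: eq_bigr => c _; rewrite (linear_forZ ext_lin).
have [_ x_id _] := HL x xL.
by rewrite big_map; apply: evald_ext_Var_identity HV x_id.
Qed.

End DerivedAlgebra.

Theorem mainTheorem11 (K : fieldType) (S : poly1 K -> Prop)
  (HS : forall s, S s -> exists k : nat, multilin1 k s)
  (n : nat) (f : poly3 K) (Hf : multilin3 n f)
  (Hid : forall (V : lmodType K) (dt pr su : V -> V -> V),
           is_VarGDshriek_alg S dt pr su -> holds3 dt pr su f) :
  gen_derived_identity S f.
Proof.
move=> A m d HV d_der; have [m_bilin _] := HV; have [d_lin _] := d_der.
apply: Hid; split.
- exact: m_bilin.
- exact: bilinear_op_comp_right.
- exact: bilinear_op_comp_left.
- move=> k g; exact: holds3_derived_zero_in_tensor.
Qed.
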